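(* Let $\mathbf{c}\in\mathbb{R}^n$, $\mathcal{K}=\{1,\dots,K\}$, and for each $k\in\mathcal{K}$ let $\mathcal{F}_k=\bigcup_{i\in\mathcal{D}_k}\mathcal{C}_{ki}$ with $\mathcal{D}_k$ finite and each $\mathcal{C}_{ki}\subset\mathbb{R}^n$ compact and convex. Define $$LR_{\mathcal{K}}(\boldsymbol{\lambda}_1,\dots,\boldsymbol{\lambda}_K)=\inf\Big\{\big(\mathbf{c}-\textstyle\sum_{k}\boldsymbol{\lambda}_k\big)^\top\mathbf{x}+\sum_{k}\boldsymbol{\lambda}_k^\top\mathbf{v}_k:\ \mathbf{x}\in\mathbb{R}^n,\ \mathbf{v}_k\in\mathcal{F}_k\ \forall k\Big\}.$$ For a partition $\mathcal{P}=\{\mathcal{J}_1,\dots,\mathcal{J}_P\}$ of $\mathcal{K}$ (nonempty, pairwise disjoint sets with union $\mathcal{K}$) and vectors $\boldsymbol{\mu}_1,\dots,\boldsymbol{\mu}_P\in\mathbb{R}^n$, define the partition relaxation $$L_{\mathcal{P}}(\boldsymbol{\mu}_1,\dots,\boldsymbol{\mu}_P)=\sum_{p=1}^P\min\Big\{\boldsymbol{\mu}_p^\top\mathbf{v}:\ \mathbf{v}\in\textstyle\bigcap_{k\in\mathcal{J}_p}\mathcal{F}_k\Big\}.$$ Then for any vectors $\boldsymbol{\lambda}_1,\dots,\boldsymbol{\lambda}_K\in\mathbb{R}^n$ and any partition $\mathcal{P}$ of $\mathcal{K}$, $$L_{\mathcal{P}}\Big(\sum_{j\in\mathcal{J}_1}\boldsymbol{\lambda}_j,\dots,\sum_{j\in\mathcal{J}_P}\boldsymbol{\lambda}_j\Big)\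 \ge\ LR_{\mathcal{K}}(\boldsymbol{\lambda}_1,\dots,\boldsymbol{\lambda}_K).$$
   Context: Convention: the minimum (infimum) over an empty set is $+\infty$. *)

From HB Require Import structures.
From mathcomp Require Import all_boot all_order all_algebra.
From mathcomp Require Import all_classical all_reals all_analysis.
Set Implicit Arguments. Unset Strict Implicit. Unset Printing Implicit Defensive.
Import Order.TTheory GRing.Theory Num.Theory.
Import numFieldNormedType.Exports.
Local Open Scope classical_set_scope.
Local Open Scope ring_scope.

Definition dotv (R : realType) (n : nat) (a b : 'rV[R]_n) : R :=
  \sum_(i < n) a ord0 i * b ord0 i.

(* F_k = union over i in D_k = {0,..,D k - 1} of C k i *)
Definition Fset (R : realType) (n K : nat) (D : 'I_K -> nat)
  (C : 'I_K -> nat -> set 'rV[R]_n) (k : 'I_K) : set 'rV[R]_n :=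
  [set v | exists2 i, (i < D k)%N & C k i v].

Definition LR (R : realType) (n K : nat) (c : 'rV[R]_n) (D : 'I_K -> nat)
  (C : 'I_K -> nat -> set 'rV[R]_n) (lam : 'I_K -> 'rV[R]_n) : \bar R :=
  ereal_inf [set e | exists x : 'rV[R]_n, exists v : 'I_K -> 'rV[R]_n,
     (forall k, Fset D C k (v k)) /\
     e = ((dotv (c - \sum_(k < K) lam k) x
           + \sum_(k < K) dotv (lam k) (v k))%R)%:E].

(* min { mu^T v : v in S } in the extended reals; min over empty set = +oo.
   (For compact nonempty S the infimum is attained, so this is the min.) *)
Definition emin_lin (R : realType) (n : nat) (mu : 'rV[R]_n)
  (S : set 'rV[R]_n) : \bar R :=
  ereal_inf [set (dotv mu v)%:E | v in S].

(* L_P(mu_1,...,mu_P) where blocks of the partition are indexed by PP and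
   mu J is the vector attached to block J *)
Definition LP (R : realType) (n K : nat) (D : 'I_K -> nat)
  (C : 'I_K -> nat -> set 'rV[R]_n) (PP : {set {set 'I_K}})
  (mu : {set 'I_K} -> 'rV[R]_n) : \bar R :=
  (\sum_(J in PP) emin_lin (mu J) [set v | forall k, k \in J -> Fset D C k v])%E.

From HB Require Import structures.
From mathcomp Require Import all_boot all_order all_algebra.
From mathcomp Require Import all_classical all_reals all_analysis.
Set Implicit Arguments. Unset Strict Implicit. Unset Printing Implicit Defensive.
Import Order.TTheory GRing.Theory Num.Theory.
Import numFieldNormedType.Exports.
Local Open Scope classical_set_scope.
Local Open Scope ring_scope.

(* Choosing one point w_J in the intersection of the F_k, k in J, for every
   block J gives a feasible point of the Lagrangian problem (x = 0 and
   v_k = w_J for k in J) whose value regroups blockwise to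
   sum_J (sum_(j in J) lambda_j)^T w_J.  So LR_K lies below every such sum,
   and taking the infimum separately in each block yields L_P.  Compactness
   keeps each blockwise minimum above -oo; this matters because in the
   extended reals -oo + +oo = -oo. *)

Lemma dotv0 (R : realType) n (a : 'rV[R]_n) : dotv a 0 = 0.
Proof. by rewrite /dotv big1 // => i _; rewrite mxE mulr0. Qed.

Lemma dotv_suml (R : realType) n (I : finType) (P : pred I)
    (a : I -> 'rV[R]_n) b :
  dotv (\sum_(j | P j) a j) b = \sum_(j | P j) dotv (a j) b.
Proof.
rewrite /dotv; under eq_bigr do rewrite summxE mulr_suml.
exact: exchange_big.
Qed.

Lemma normr_dotv_le (R : realType) n (a b : 'rV[R]_n) :
  `|dotv a b| <= (\sum_(i < n) `|a ord0 i|) * `|b|.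
Proof.
rewrite /dotv mulr_suml; apply: le_trans (ler_norm_sum _ _ _) _.
apply: ler_sum => i _; rewrite normrM ler_wpM2l //.
rewrite [`|b|]mx_normrE.
exact: (le_bigmax 0 (fun ij : 'I_1 * 'I_n => `|b ij.1 ij.2|) (ord0, i)).
Qed.

Lemma dotv_bounded_below (R : realType) n (a : 'rV[R]_n) (A : set 'rV[R]_n)
    (M : R) :
  (forall v, A v -> `|v| <= M) -> exists B, forall v, A v -> B <= dotv a v.
Proof.
move=> A_le; exists (- ((\sum_(i < n) `|a ord0 i|) * M)) => v Av.
apply: lerNnormlW; rewrite (le_trans (normr_dotv_le a v)) //.
by rewrite ler_wpM2l ?A_le ?sumr_ge0.
Qed.

Lemma Fset_bounded (R : realType) (n K : nat) (D : 'I_K -> nat)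
    (C : 'I_K -> nat -> set 'rV[R]_n) k :
  (forall i, (i < D k)%N -> compact (C k i)) ->
  exists M, forall v, Fset D C k v -> `|v| <= M.
Proof.
move=> C_compact; have : compact (\big[setU/set0]_(i < D k) C k i).
  by apply: bigsetU_compact => i _; apply: C_compact.
move=> /compact_bounded[M [_ M_bound]]; exists (M + 1) => v [i iD Cv].
by apply: M_bound; [rewrite ltrDl | rewrite -bigcup_mkord; exists i].
Qed.

Lemma le_sum_ereal_inf (R : realType) (I : finType) (A : {set I})
    (T : pointedType) (S : I -> set T) (f : I -> T -> R) (L : \bar R) :
  (forall i, i \in A -> exists B : R, forall t, S i t -> B <= f i t) ->
  (forall w : I -> T, (forall i, i \in A -> S i (w i)) ->
     (L <= (\sum_(i in A) f i (w i))%:E)%E) ->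
  (L <= \sum_(i in A) ereal_inf [set (f i t)%:E | t in S i])%E.
Proof.
move=> fS_lb L_le.
set m := fun i => ereal_inf [set (f i t)%:E | t in S i].
have m_ge i : i \in A -> exists B : R, (B%:E <= m i)%E.
  move=> iA; have [B fB] := fS_lb i iA; exists B.
  by apply/ereal_infP => _ [t St <-]; rewrite lee_fin fB.
have m_neqNy i : i \in A -> m i != -oo%E.
  by move=> /m_ge[B]; apply: contraTneq => ->; rewrite leeNy_eq.
have [S_nonempty|] := pselect (forall i, i \in A -> S i !=set0); last first.
  move=> /existsNP[i /not_implyP[iA /set0P/negP/negbNE/eqP Si0]].
  suff -> : (\sum_(i in A) m i = +oo)%E by rewrite leey.
  apply/eqP; rewrite esum_eqy //; apply/existsP; exists i.
  by rewrite iA /m Si0 image_set0 ereal_inf0.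
have m_fin i : i \in A -> m i = (fine (m i))%:E.
  move=> iA; have [t St] := S_nonempty i iA; apply/esym/fineK.
  rewrite fin_numE m_neqNy //= -ltey.
  by apply: le_lt_trans (ltry (f i t)); apply: ereal_inf_lbound; exists t.
rewrite (eq_bigr _ m_fin) sumEFin; apply/lee_addgt0Pr => e e_gt0.
pose d := e / #|A|.+1%:R. (* the [.+1] keeps [d > 0] when [A] is empty *)
have d_gt0 : 0 < d by rewrite divr_gt0.
have near_inf i : exists t, i \in A -> S i t /\ f i t < fine (m i) + d.
  have [iA|] := boolP (i \in A); last by exists point.
  have : (m i < (fine (m i) + d)%:E)%E by rewrite {1}m_fin // lte_fin ltrDl.
  by case/ereal_inf_lt => _ [t St <-]; rewrite lte_fin => lt_t; exists t.
have [w hw] := choice near_inf.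
apply: le_trans (L_le w (fun i iA => (hw i iA).1)) _.
rewrite -EFinD lee_fin (le_trans (ler_sum _ (fun i iA => ltW (hw i iA).2))) //.
rewrite big_split /= lerD2l sumr_const -mulr_natr /d mulrAC.
by rewrite ler_pdivrMr // ler_pM2l // ler_nat.
Qed.

Lemma LR_le_blockwise (R : realType) (n K : nat) (c : 'rV[R]_n)
    (D : 'I_K -> nat) (C : 'I_K -> nat -> set 'rV[R]_n)
    (lam : 'I_K -> 'rV[R]_n) (PP : {set {set 'I_K}})
    (w : {set 'I_K} -> 'rV[R]_n) :
  finset.partition PP [set: 'I_K] ->
  (forall J, J \in PP -> forall k, k \in J -> Fset D C k (w J)) ->
  (LR c D C lam <= (\sum_(J in PP) dotv (\sum_(j in J) lam j) (w J))%:E)%E.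
Proof.
case/and3P=> /eqP PP_cover PP_triv _ w_in.
have pblock_PP k : finset.pblock PP k \in PP.
  by rewrite finset.pblock_mem // PP_cover inE.
have in_pblock k : k \in finset.pblock PP k.
  by rewrite finset.mem_pblock PP_cover inE.
apply: ereal_inf_lbound; exists 0, (fun k => w (finset.pblock PP k)).
split=> [k|]; first exact: w_in (pblock_PP k) _ (in_pblock k).
rewrite dotv0 add0r (partition_big _ (mem PP) (fun k _ => pblock_PP k)) /=.
congr EFin; apply: eq_bigr => J J_PP; rewrite dotv_suml.
have pblockE k : k \in J -> finset.pblock PP k = J by exact: finset.def_pblock.
apply: eq_big => [k|k /pblockE -> //].
by apply/idP/eqP => [/pblockE|<-].
Qed.

Theorem proposition4 (R : realType) (n K : nat) (c : 'rV[R]_n)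
  (D : 'I_K -> nat) (C : 'I_K -> nat -> set 'rV[R]_n)
  (hcomp : forall k i, (i < D k)%N -> compact (C k i))
  (hconv : forall k i, (i < D k)%N ->
     convex_set (C k i : set (convex_lmodType 'rV[R]_n)))
  (lam : 'I_K -> 'rV[R]_n) (PP : {set {set 'I_K}})
  (hPP : finset.partition PP [set: 'I_K]) :
  (LR c D C lam <= LP D C PP (fun J => (\sum_(j in J) lam j)%R))%E.
Proof.
apply: le_sum_ereal_inf => [J J_PP|w w_in]; last exact: LR_le_blockwise.
have /finset.set0Pn[k kJ] : J != finset.set0.
  by case/and3P: hPP => _ _; apply: contraNneq => <-.
have [M M_bound] := Fset_bounded (hcomp k).
by apply: dotv_bounded_below => v v_in; apply/M_bound/v_in.
Qed.
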